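(* Fix an integer $\Delta\geq 2$. There exists $N$ (depending on $\Delta$) such that for every $2$-connected finite simple graph $G$ on $n\geq N$ vertices with maximum degree $\Delta$, the polynomial $\mathrm{nRel}(G;p)$ has at least two fixed points in $(0,1)$, i.e. at least two distinct $p\in(0,1)$ with $\mathrm{nRel}(G;p)=p$.
   Context: For a graph $G$ on $n$ vertices, a connected set is a nonempty vertex subset $C$ such that the induced subgraph $G[C]$ is connected. The node reliability of $G$ is the polynomial \[ \mathrm{nRel}(G;p)=\sum_{C}p^{|C|}(1-p)^{n-|C|}, \] the sum over all connected sets $C$ of $G$. *)

From HB Require Import structures.
From mathcomp Require Import all_boot all_order all_algebra.
From mathcomp Require Import reals.
Set Implicit Arguments. Unset Strict Implicit. Unset Printing Implicit Defensive.
Import Order.TTheory GRing.Theory Num.Theory.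

Definition simple_graph (T : finType) (e : rel T) : Prop :=
  symmetric e /\ irreflexive e.

Definition induced_rel (T : finType) (e : rel T) (C : {set T}) : rel T :=
  [rel x y | [&& x \in C, y \in C & e x y]].

Definition connected_set (T : finType) (e : rel T) (C : {set T}) : bool :=
  (C != set0) && [forall x in C, forall y in C, connect (induced_rel e C) x y].

Definition two_connected (T : finType) (e : rel T) : Prop :=
  2 < #|T| /\ connected_set e [set: T] /\
  forall v : T, connected_set e (~: [set v]).

Definition degree (T : finType) (e : rel T) (v : T) : nat := #|[set u | e v u]|.

Definition max_degree (T : finType) (e : rel T) : nat := \max_(v : T) degree e v.

Local Open Scope ring_scope.

Definition nRel (T : finType) (e : rel T) (R : realType) (p : R) : R :=
  \sum_(C : {set T} | connected_set e C) p ^+ #|C| * (1 - p) ^+ (#|T| - #|C|).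

From HB Require Import structures.
From mathcomp Require Import all_boot all_order all_algebra.
From mathcomp Require Import reals polyrcf.
From mathcomp Require Import zify ring lra.
Set Implicit Arguments. Unset Strict Implicit. Unset Printing Implicit Defensive.
Import Order.TTheory GRing.Theory Num.Theory.

(* A connected set with at least two vertices has no isolated
   vertex.  Greedily pick k = 2^(D+1) vertices with pairwise disjoint closed
   neighbourhoods, D = Delta + 1 (possible once n > k D^2, since a vertex
   spoils at most D^2 others).  Isolating one of them by a change inside its
   closed neighbourhood sends at most 2^D sets to each set isolating it and
   does not affect the others, so at most (1 - 2^-D)^k 2^n <= 2^n / 4 sets
   isolate none of them.  Hence G has fewer than 2^(n-1) connected sets, i.e.
   nRel(G;1/2) < 1/2.  The n singletons give nRel(G;p) > p at p = 1/n^2, and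
   V together with the n connected sets V - v give nRel(G;p) > p at
   p = 1 - 1/n^2; the intermediate value theorem provides a fixed point on
   each side of 1/2. *)

Section IsolatedVertices.
Variables (T : finType) (e : rel T).

Definition nbhd (v : T) : {set T} := [set u | e v u].
Definition cnbhd (v : T) : {set T} := v |: nbhd v.

Definition isolated (C : {set T}) (v : T) : bool :=
  (v \in C) && [disjoint nbhd v & C].

Definition isolated_free (I : seq T) : {set {set T}} :=
  [set C | ~~ has (isolated C) I].

Definition separated (I : seq T) : bool :=
  pairwise (fun u v => [disjoint cnbhd u & cnbhd v]) I.

Definition isolate (v : T) (C : {set T}) : {set T} := v |: (C :\: nbhd v).

Lemma mem_cnbhd_self v : v \in cnbhd v.
Proof. exact: setU11. Qed.

Lemma card_cnbhd_le_max_degree v :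
  (#|cnbhd v| <= (max_degree e).+1)%N.
Proof. by rewrite cardsU1 -add1n leq_add ?leq_b1 // (leq_bigmax v). Qed.

Lemma isolated_local u (C C' : {set T}) :
  {in cnbhd u, C =i C'} -> isolated C u = isolated C' u.
Proof.
move=> CC'; rewrite /isolated CC' ?mem_cnbhd_self //; congr (_ && _).
rewrite -!setI_eq0; congr (_ == _); apply/setP => x; rewrite !inE.
by case exu: (e u x) => //=; rewrite CC' // !inE exu orbT.
Qed.

Lemma isolate_out v C x : x \notin cnbhd v -> (x \in isolate v C) = (x \in C).
Proof. by rewrite !inE negb_or => /andP[/negbTE-> /negbTE->]. Qed.

Lemma isolate_recover v C : C = (isolate v C :\: cnbhd v) :|: (C :&: cnbhd v).
Proof.
apply/setP => x; rewrite !inE.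
by case: (x == v); case: (e v x); case: (x \in C).
Qed.

Hypothesis eirr : irreflexive e.

Lemma isolated_isolate v C : isolated (isolate v C) v.
Proof.
rewrite /isolated setU11 -setI_eq0; apply/eqP/setP => x; rewrite !inE.
by case: eqP => [->|_]; rewrite ?eirr //=; case: (e v x).
Qed.

End IsolatedVertices.

Section Counting.
Variables (T : finType) (e : rel T).
Hypothesis eirr : irreflexive e.

Local Notation cnbhd := (cnbhd e).
Local Notation isolated := (isolated e).
Local Notation isolated_free := (isolated_free e).
Local Notation isolate := (isolate e).

Lemma isolated_free_isolate v I C :
  all (fun u => [disjoint cnbhd v & cnbhd u]) I ->
  (isolate v C \in isolated_free I) = (C \in isolated_free I).
Proof.
move=> /allP dvI; rewrite !inE; congr negb; apply: eq_in_has => u /dvI dvu.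
by apply: isolated_local => x xu; rewrite isolate_out // (disjointFl dvu xu).
Qed.

Lemma card_isolated_free_cons v I D :
  all (fun u => [disjoint cnbhd v & cnbhd u]) I -> (#|cnbhd v| <= D)%N ->
  (2 ^ D * #|isolated_free (v :: I)| <= (2 ^ D).-1 * #|isolated_free I|)%N.
Proof.
move=> dvI vD; set B := [set C in isolated_free I | isolated C v].
have cardI : #|isolated_free I| = (#|B| + #|isolated_free (v :: I)|)%N.
  rewrite -(cardsID [set C | isolated C v] (isolated_free I)); congr addn.
    by apply: eq_card => C; rewrite !inE.
  by apply: eq_card => C; rewrite !inE /= negb_or andbC.
have leI : (#|isolated_free I| <= 2 ^ D * #|B|)%N.
  pose f C := (isolate v C, C :&: cnbhd v).
  have f_inj : injective f.
    move=> C C' [eC eC'].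
    by rewrite (isolate_recover e v C) (isolate_recover e v C') eC eC'.
  rewrite -(card_imset _ f_inj).
  have sub : f @: isolated_free I \subset setX B (powerset (cnbhd v)).
    apply/subsetP => _ /imsetP[C CI ->].
    rewrite in_setX /= powersetE subsetIr andbT in_set (isolated_isolate eirr) andbT.
    by rewrite (isolated_free_isolate C dvI).
  rewrite (leq_trans (subset_leq_card sub)) // cardsX card_powerset mulnC.
  by rewrite leq_mul2r leq_pexp2l ?orbT.
have := expn_gt0 2 D; case: (2 ^ D) leI => // K leI _ /=.
by rewrite cardI !mulSn leq_add2l mulnDr leq_add2r in leI *.
Qed.

Lemma card_isolated_free I D :
  separated e I -> (forall v, #|cnbhd v| <= D)%N ->
  ((2 ^ D) ^ size I * #|isolated_free I| <= (2 ^ D).-1 ^ size I * 2 ^ #|T|)%N.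
Proof.
move=> + cnbhdD; elim: I => [_|v I IH] /=.
  rewrite !expn0 !mul1n -cardsT -card_powerset powersetT.
  by apply: subset_leq_card; apply/subsetP => C; rewrite inE.
case/andP => dvI sepI.
rewrite !expnS -!mulnA (mulnCA (2 ^ D)) (mulnCA _.-1).
apply: leq_trans (leq_mul (leqnn _) (card_isolated_free_cons dvI (cnbhdD v))) _.
by rewrite !(mulnCA _ (2 ^ D).-1) leq_mul2l IH ?orbT.
Qed.
End Counting.

Lemma leq_card_bigcup (I T : finType) (P : pred I) (F : I -> {set T}) :
  (#|\bigcup_(i | P i) F i| <= \sum_(i | P i) #|F i|)%N.
Proof.
elim/big_rec2: _ => [|i n U _ leUn]; first by rewrite cards0.
by rewrite (leq_trans (leq_card_setU _ _)) // leq_add2l.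
Qed.

Section SeparatedVertices.
Variables (T : finType) (e : rel T).
Hypothesis esym : symmetric e.

Local Notation cnbhd := (cnbhd e).

Definition ball2 (u : T) : {set T} := \bigcup_(w in cnbhd u) cnbhd w.

Lemma cnbhd_sym u v : (u \in cnbhd v) = (v \in cnbhd u).
Proof. by rewrite !inE eq_sym esym. Qed.

Lemma card_ball2 D u : (forall v, #|cnbhd v| <= D)%N -> (#|ball2 u| <= D ^ 2)%N.
Proof.
move=> cnbhdD; rewrite /ball2; apply: leq_trans (leq_card_bigcup _ _) _.
apply: (@leq_trans (\sum_(w in cnbhd u) D)); first exact: leq_sum.
by rewrite sum_nat_const leq_mul2r cnbhdD orbT.
Qed.

Lemma disjoint_cnbhd v u : v \notin ball2 u -> [disjoint cnbhd v & cnbhd u].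
Proof.
apply: contraR => /pred0Pn[x /andP[xv xu]].
by apply/bigcupP; exists x; rewrite // -cnbhd_sym.
Qed.

Lemma exists_separated D k :
  (forall v, #|cnbhd v| <= D)%N -> (k * D ^ 2 < #|T|)%N ->
  exists2 I, size I = k & separated e I.
Proof.
move=> cnbhdD; elim: k => [|k IH] ltkT; first by exists [::].
have [I sizeI sepI] := IH (leq_ltn_trans (leq_mul (leqnSn k) (leqnn _)) ltkT).
set U := \bigcup_(u in I) ball2 u.
have ltUT : (#|U| < #|T|)%N.
  apply: leq_ltn_trans (leq_card_bigcup _ _) _.
  apply: (@leq_ltn_trans (\sum_(u in I) D ^ 2)).
    by apply: leq_sum => u _; apply: card_ball2.
  rewrite sum_nat_const (leq_ltn_trans _ ltkT) // -sizeI leq_mul2r.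
  by rewrite (leq_trans (card_size I)) ?leqnSn ?orbT.
have /subsetPn[v _ vU] : ~~ ([set: T] \subset U).
  by apply: contraL ltUT => /subset_leq_card; rewrite cardsT -leqNgt.
exists (v :: I); first by rewrite /= sizeI.
rewrite /separated /= -/(separated e I) sepI andbT; apply/allP => u uI.
by apply: disjoint_cnbhd; apply: contra vU => vu; apply/bigcupP; exists u.
Qed.

End SeparatedVertices.

Section ConnectedSets.
Variables (T : finType) (e : rel T).

Lemma connected_set_isolated C v :
  connected_set e C -> isolated e C v -> C = [set v].
Proof.
case/andP => _ /forallP connC /andP[vC /pred0P nbhdC].
apply/setP => w; rewrite inE; apply/idP/eqP => [wC|-> //].
have := connC v; rewrite vC => /forallP/(_ w); rewrite wC /=.
case/connectP => [[_ -> //|x p /= /andP[/and3P[_ xC evx] _] _]].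
by have := nbhdC x; rewrite /= inE evx xC.
Qed.

Lemma card_connected_sets I :
  (#|[set C | connected_set e C]| <= #|T| + #|isolated_free e I|)%N.
Proof.
have sub :
    [set C | connected_set e C] \subset [set [set x] | x : T] :|: isolated_free e I.
  apply/subsetP => C; rewrite inE => connC; rewrite in_setU inE.
  case: hasP => [[v _ /(connected_set_isolated connC) ->]|_]; last by rewrite orbT.
  by rewrite imset_f.
apply: leq_trans (subset_leq_card sub) _; apply: leq_trans (leq_card_setU _ _) _.
by rewrite leq_add2r leq_imset_card.
Qed.

End ConnectedSets.

Lemma expn_bernoulli a k : (a ^ k * (a + k) <= a.+1 ^ k * a)%N.
Proof. by elim: k => [|k IHk]; rewrite ?addn0 // !expnS; nia. Qed.

Lemma expn_pred_half K : (0 < K)%N -> (2 * K.-1 ^ K <= K ^ K)%N.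
Proof.
case: K => // a _ /=; case: a => // a.
have := expn_bernoulli a.+1 a.+2; rewrite !expnS; nia.
Qed.

Lemma four_mul_lt_exp2 n : (5 <= n)%N -> (4 * n < 2 ^ n)%N.
Proof.
elim: n => // n IHn; rewrite leq_eqVlt => /orP[/eqP <- //|lt4n].
by have := IHn lt4n; rewrite expnS; lia.
Qed.

Lemma double_card_connected_sets_lt (T : finType) (e : rel T) D :
  symmetric e -> irreflexive e -> (forall v, #|cnbhd e v| <= D)%N ->
  (5 <= #|T|)%N -> (2 ^ D.+1 * D ^ 2 < #|T|)%N ->
  (2 * #|[set C | connected_set e C]| < 2 ^ #|T|)%N.
Proof.
move=> esym eirr cnbhdD leT ltT; set K := 2 ^ D.
rewrite expnSr -/K in ltT.
have [I sizeI sepI] := exists_separated esym cnbhdD ltT.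
have := card_isolated_free eirr sepI cnbhdD; rewrite sizeI -/K.
have quarter : (4 * K.-1 ^ (K * 2) <= K ^ (K * 2))%N.
  by rewrite !expnM -[4]/(2 ^ 2)%N -expnMn leq_exp2r // expn_pred_half ?expn_gt0.
have K_gt0 : (0 < K ^ (K * 2))%N by rewrite expn_gt0 expn_gt0.
have := card_connected_sets e I; have := four_mul_lt_exp2 leT.
set g := #|isolated_free e I|; set c := #|_|; set N := #|T|.
move=> ltN le_c le_g.
have : (K ^ (K * 2) * (4 * g) <= K ^ (K * 2) * 2 ^ N)%N.
  rewrite mulnCA (leq_trans (leq_mul (leqnn 4) le_g)) // mulnA leq_mul2r.
  by rewrite quarter orbT.
rewrite leq_pmul2l //; lia.
Qed.

Local Open Scope ring_scope.

Lemma bernoulli_le (R : realDomainType) (a : R) k :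
  a <= 1 -> 1 - k%:R * a <= (1 - a) ^+ k.
Proof.
move=> le_a1; elim: k => [|k IHk]; first by rewrite mul0r subr0 expr0.
have a_ge0 : 0 <= 1 - a by rewrite subr_ge0.
have k_ge0 : 0 <= k%:R :> R := ler0n _ k.
have := ler_wpM2l a_ge0 IHk; rewrite exprS -natr1; nra.
Qed.

Section InverseSquare.
Variables (R : realFieldType) (m : nat).
Hypothesis m_gt0 : (0 < m)%N.

Let s : R := m.+1%:R^-1.

Let s_bounds : 0 < s /\ 2 * s <= 1.
Proof.
have s_gt0 : 0 < s by rewrite invr_gt0.
by split; rewrite // -ler_pdivlMl // mulr1 lef_pV2 ?posrE // ler_nat ltnS.
Qed.

Let succ_mul_s : (m%:R + 1) * s = 1.
Proof. by rewrite natr1 mulfV ?pnatr_eq0. Qed.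

Let bernoulli_s : 1 - (s - s ^+ 2) <= (1 - s ^+ 2) ^+ m.
Proof.
have ms : m%:R * s = 1 - s by move: succ_mul_s; rewrite mulrDl mul1r; lra.
have -> : s - s ^+ 2 = m%:R * s ^+ 2 by rewrite !expr2 mulrA ms; ring.
by apply: bernoulli_le; have [] := s_bounds; nra.
Qed.

Lemma lt_singleton_bound_inv_sq :
  m.+1%:R ^- 2 < m.+1%:R * (m.+1%:R ^- 2 * (1 - m.+1%:R ^- 2) ^+ m) :> R.
Proof.
rewrite -exprVn -/s -natr1; have := bernoulli_s; set b := _ ^+ m => le_b.
have -> : (m%:R + 1) * (s ^+ 2 * b) = s * b.
  by transitivity ((m%:R + 1) * s * (s * b)); [ring | rewrite succ_mul_s mul1r].
have [s_gt0 le_2s_1] := s_bounds.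
by rewrite expr2 ltr_pM2l //; nra.
Qed.

Lemma lt_cosingleton_bound_inv_sq :
  1 - m.+1%:R ^- 2 <
  (1 - m.+1%:R ^- 2) ^+ m.+1 + m.+1%:R * ((1 - m.+1%:R ^- 2) ^+ m * m.+1%:R ^- 2) :> R.
Proof.
rewrite -exprVn -/s -natr1; have := bernoulli_s; set b := _ ^+ m => le_b.
have -> : (m%:R + 1) * (b * s ^+ 2) = b * s.
  by transitivity ((m%:R + 1) * s * (b * s)); [ring | rewrite succ_mul_s mul1r].
rewrite [_ ^+ m.+1]exprSr -/b; have [s_gt0 le_2s_1] := s_bounds.
have : (1 - (s - s ^+ 2)) * (1 + (s - s ^+ 2)) <= b * (1 - s ^+ 2 + s).
  by rewrite [1 - s ^+ 2 + s]addrAC -addrA ler_wpM2r //; nra.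
have [t_gt0 lt_ts] : 0 < s - s ^+ 2 /\ s - s ^+ 2 < s by split; nra.
nra.
Qed.

Lemma inv_sq_bounds : 0 < (m.+1%:R ^- 2 : R) < 2^-1.
Proof.
rewrite -exprVn -/s; have [s_gt0 le_2s_1] := s_bounds.
by apply/andP; split; [rewrite exprn_gt0 | rewrite expr2; nra].
Qed.

End InverseSquare.

Lemma ler_sum_subpred (R : numDomainType) (I : finType) (P Q : pred I) (F : I -> R) :
  (forall i, P i -> Q i) -> (forall i, Q i -> 0 <= F i) ->
  \sum_(i | P i) F i <= \sum_(i | Q i) F i.
Proof.
move=> PQ F_ge0; rewrite [X in _ <= X](bigID P) /=.
rewrite [X in _ <= X + _](eq_bigl P) => [|i]; last exact/andb_idl/PQ.
by rewrite lerDl sumr_ge0 // => i /andP[/F_ge0].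
Qed.

Lemma poly_fixpoint_between (R : rcfType) (P : {poly R}) a b :
  a <= b -> (P.[a] - a) * (P.[b] - b) < 0 -> exists2 x, a < x < b & P.[x] = x.
Proof.
have hornerBX x : (P - 'X).[x] = P.[x] - x by rewrite hornerD hornerN hornerX.
move=> le_ab; rewrite -!hornerBX => /(poly_ivtoo le_ab)[x].
rewrite in_itv /= => axb /rootP; rewrite hornerBX => /eqP.
by rewrite subr_eq0 => /eqP; exists x.
Qed.

Lemma connected_set1 (T : finType) (e : rel T) x : connected_set e [set x].
Proof.
rewrite /connected_set -cards_eq0 cards1 /=.
by apply/forall_inP => y /set1P -> ; apply/forall_inP => z /set1P ->; apply: connect0.
Qed.

Section NodeReliability.
Variables (R : realType) (T : finType) (e : rel T).

Definition nRel_poly : {poly R} :=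
  \sum_(C : {set T} | connected_set e C) 'X ^+ #|C| * (1 - 'X) ^+ (#|T| - #|C|).

Lemma horner_nRel_poly p : nRel_poly.[p] = nRel e p.
Proof. by rewrite horner_sum; apply: eq_bigr => C _; rewrite !hornerE. Qed.

Lemma nRel_fixpoint_between (a b : R) :
  a <= b -> (nRel e a - a) * (nRel e b - b) < 0 ->
  exists2 x, a < x < b & nRel e x = x.
Proof.
rewrite -!horner_nRel_poly => le_ab /(poly_fixpoint_between le_ab)[x axb].
by rewrite horner_nRel_poly; exists x.
Qed.

Lemma nRel_term_ge0 (p : R) (C : {set T}) :
  0 <= p <= 1 -> 0 <= p ^+ #|C| * (1 - p) ^+ (#|T| - #|C|).
Proof. by case/andP => p_ge0 p_le1; rewrite mulr_ge0 ?exprn_ge0 ?subr_ge0. Qed.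

Lemma nRel_half :
  nRel e (2^-1 : R) = #|[set C | connected_set e C]|%:R / 2 ^+ #|T|.
Proof.
have half : 1 - 2^-1 = 2^-1 :> R by field.
rewrite /nRel half -big_set /= (eq_bigr (fun _ => 2^-1 ^+ #|T|)) => [|C _].
  by rewrite sumr_const mulr_natl exprVn.
by rewrite -exprD subnKC ?max_card.
Qed.

Lemma nRel_ge_singletons (p : R) :
  0 <= p <= 1 -> #|T|%:R * (p * (1 - p) ^+ #|T|.-1) <= nRel e p.
Proof.
move=> p01.
apply: le_trans (ler_sum_subpred (P := mem [set [set x] | x : T]) _ _) => /=.
- rewrite big_imset /=; last by move=> x y _ _; apply: set1_inj.
  rewrite (eq_bigr (fun _ => p * (1 - p) ^+ #|T|.-1)) => [|x _].
    by rewrite sumr_const mulr_natl.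
  by rewrite cards1 expr1 subn1.
- by move=> C /imsetP[x _ ->]; apply: connected_set1.
- by move=> C _; apply: nRel_term_ge0.
Qed.

Lemma nRel_ge_cosingletons (p : R) :
  0 <= p <= 1 -> connected_set e [set: T] -> (forall v, connected_set e [set~ v]) ->
  p ^+ #|T| + #|T|%:R * (p ^+ #|T|.-1 * (1 - p)) <= nRel e p.
Proof.
move=> p01 connT connC; rewrite /nRel (bigD1 setT) //= cardsT subnn mulr1 lerD2l.
apply: le_trans (ler_sum_subpred (P := mem [set [set~ v] | v : T]) _ _) => /=.
- rewrite big_imset /=; last by move=> u v _ _ /setC_inj /set1_inj.
  rewrite (eq_bigr (fun _ => p ^+ #|T|.-1 * (1 - p))) => [|v _].
    by rewrite sumr_const mulr_natl.
  have : (0 < #|T|)%N by apply/card_gt0P; exists v.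
  by rewrite cardsC1 => T_gt0; rewrite (_ : #|T| - #|T|.-1 = 1)%N ?expr1 //; lia.
- move=> C /imsetP[v _ ->]; rewrite connC /=.
  by apply/eqP => /setP/(_ v); rewrite !inE eqxx.
- by move=> C _; apply: nRel_term_ge0.
Qed.

Lemma nRel_half_lt :
  (2 * #|[set C | connected_set e C]| < 2 ^ #|T|)%N -> nRel e (2^-1 : R) < 2^-1.
Proof.
rewrite -(ltr_nat R) natrM natrX nRel_half => lt_c.
by rewrite ltr_pdivrMr ?exprn_gt0 //; lra.
Qed.

Lemma nRel_two_fixpoints :
  (1 < #|T|)%N -> (2 * #|[set C | connected_set e C]| < 2 ^ #|T|)%N ->
  connected_set e [set: T] -> (forall v, connected_set e [set~ v]) ->
  exists p1 p2 : R,
    [/\ p1 != p2, 0 < p1 < 1, 0 < p2 < 1, nRel e p1 = p1 & nRel e p2 = p2].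
Proof.
move=> lt1T /nRel_half_lt half_lt connT connC.
have [m nT] : exists m, #|T| = m.+1 by exists #|T|.-1; rewrite prednK // ltnW.
have m_gt0 : (0 < m)%N by rewrite -ltnS -nT.
have /andP[a_gt0 a_lt_half] := inv_sq_bounds R m_gt0.
set a := _ ^- 2 in a_gt0 a_lt_half.
have a01 : 0 <= a <= 1 by rewrite ltW //=; lra.
have c01 : 0 <= 1 - a <= 1 by apply/andP; split; lra.
have small : a < nRel e a.
  apply: lt_le_trans (nRel_ge_singletons a01).
  by rewrite nT; apply: lt_singleton_bound_inv_sq.
have large : 1 - a < nRel e (1 - a).
  apply: lt_le_trans (nRel_ge_cosingletons c01 connT connC).
  by rewrite nT subKr; apply: lt_cosingleton_bound_inv_sq.
have [p1 /andP[a_lt_p1 p1_lt_half] fix1] : exists2 p1, a < p1 < 2^-1 & nRel e p1 = p1.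
  by apply: nRel_fixpoint_between; rewrite ?ltW // pmulr_rlt0 ?subr_gt0 ?subr_lt0.
have [p2 /andP[half_lt_p2 p2_lt_c] fix2] :
    exists2 p2, 2^-1 < p2 < 1 - a & nRel e p2 = p2.
  by apply: nRel_fixpoint_between; rewrite ?ltW ?nmulr_rlt0 ?subr_gt0 ?subr_lt0 //; lra.
exists p1, p2; split=> //; last by apply/andP; split; lra.
- by rewrite lt_eqF // (lt_trans p1_lt_half).
- by apply/andP; split; lra.
Qed.

End NodeReliability.

Theorem theorem4p3 (Delta : nat) (hDelta : (2 <= Delta)%N) :
  exists N : nat,
    forall (T : finType) (e : rel T),
      simple_graph e -> two_connected e -> (N <= #|T|)%N ->
      max_degree e = Delta ->
      forall R : realType,
        exists p1 p2 : R,
          [/\ p1 != p2, 0 < p1 < 1, 0 < p2 < 1,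
              nRel e p1 = p1 & nRel e p2 = p2].
Proof.
pose D := Delta.+1; exists (maxn 5 (2 ^ D.+1 * D ^ 2).+1).
move=> T e [esym eirr] [_ [connT connC]] leNT maxdeg R.
have cnbhdD v : (#|cnbhd e v| <= D)%N by rewrite /D -maxdeg card_cnbhd_le_max_degree.
move: leNT; rewrite geq_max => /andP[le5T ltT].
apply: nRel_two_fixpoints => //; first exact: leq_trans le5T.
exact: double_card_connected_sets_lt.
Qed.
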